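(* Let $\mathcal{A}$, $\mathcal{E}=\Omega^1(\mathcal{A})$, the splitting $\mathcal{E}\otimes_{\mathcal{A}}\mathcal{E}=\ker(\wedge)\oplus\mathcal{F}$, $\sigma$ and $\nabla_0$ be as in the context, assume $\mathcal{E}$ is centered and $\sigma(\omega\otimes_{\mathcal{A}}\eta)=\eta\otimes_{\mathcal{A}}\omega$ for all $\omega,\eta\in\mathcal{Z}(\mathcal{E})$. Let $g$ be a bilinear pseudo-Riemannian metric on $\mathcal{E}$ and $\nabla$ a torsionless connection on $\mathcal{E}$ which is compatible with $g$ on $\mathcal{Z}(\mathcal{E})$. Write $\nabla(\eta)=\sum_i\eta_{(0)i}\otimes_{\mathcal{A}}\eta_{(1)i}$ and $\nabla_0(\omega)=\sum_i{}_{(0)}\omega_i\otimes_{\mathcal{A}}{}_{(1)}\omega_i$ with $\eta_{(1)i},{}_{(1)}\omega_i\in\mathcal{Z}(\mathcal{E})$, and abbreviate $g(a\otimes_{\mathcal{A}} x_{(0)})g(b\otimes_{\mathcal{A}} x_{(1)}):=\sum_i g(a\otimes_{\mathcal{A}} x_{(0)i})g(b\otimes_{\mathcal{A}} x_{(1)i})$ and similarly for the other products. Then for all $\omega,\eta,\theta\in\mathcal{Z}(\mathcal{E})$, \begin{align*} 2g(\omega\otimes_{\mathcal{A}}\eta_{(0)})g(\theta\otimes_{\mathcal{A}}\eta_{(1)}) &=g(\omega\otimes_{\mathcal{A}}dg(\eta\otimes_{\mathcal{A}}\theta))-g(\eta\otimes_{\mathcal{A}}dg(\theta\otimes_{\mathcal{A}}\omega))+g(\theta\otimes_{\mathcal{A}}dg(\omega\otimes_{\mathcal{A}}\eta))\\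 &\quad-g(\eta\otimes_{\mathcal{A}}{}_{(0)}\omega)g(\theta\otimes_{\mathcal{A}}{}_{(1)}\omega)+g(\eta\otimes_{\mathcal{A}}{}_{(1)}\omega)g(\theta\otimes_{\mathcal{A}}{}_{(0)}\omega)\\ &\quad+g(\omega\otimes_{\mathcal{A}}{}_{(0)}\eta)g(\theta\otimes_{\mathcal{A}}{}_{(1)}\eta)-g(\omega\otimes_{\mathcal{A}}{}_{(1)}\eta)g(\theta\otimes_{\mathcal{A}}{}_{(0)}\eta)\\ &\quad-g(\eta\otimes_{\mathcal{A}}{}_{(0)}\theta)g(\omega\otimes_{\mathcal{A}}{}_{(1)}\theta)+g(\eta\otimes_{\mathcal{A}}{}_{(1)}\theta)g(\omega\otimes_{\mathcal{A}}{}_{(0)}\theta). \end{align*}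
   Context: $\mathcal{A}$ is a complex algebra with a differential calculus $(\Omega(\mathcal{A}),d)$ (graded, $\Omega^0=\mathcal{A}$, bimodules $\Omega^j$, bimodule product $\wedge$ adding degrees, $d^2=0$, graded Leibniz rule, $\Omega^j$ right-spanned by $da_0\wedge\cdots\wedge da_{j-1}$); $\mathcal{E}=\Omega^1(\mathcal{A})$ is a finitely generated projective right $\mathcal{A}$-module and $\wedge:\mathcal{E}\otimes_{\mathcal{A}}\mathcal{E}\to\Omega^2(\mathcal{A})$ is the induced product. A connection is a $\mathbb{C}$-linear $\nabla:\mathcal{E}\to\mathcal{E}\otimes_{\mathcal{A}}\mathcal{E}$ with $\nabla(\omega a)=\nabla(\omega)a+\omega\otimes_{\mathcal{A}}da$; torsionless means $\wedge\circ\nabla+d=0$. Assume $\mathcal{E}\otimes_{\mathcal{A}}\mathcal{E}=\ker(\wedge)\oplus\mathcal{F}$, $\mathcal{F}$ a right submodule with $Q:=\wedge|_{\mathcal{F}}:\mathcal{F}\to\Omega^2(\mathcal{A})$ a right module isomorphism; $P_{\rm sym}$ is the idempotent with image $\ker\wedge$ and kernel $\mathcal{F}$, $\sigma=2P_{\rm sym}-1$. With an idempotent $p\in M_n(\mathcal{A})$, $p(\mathcal{A}^n)=\mathcal{E}$, $\Phi_j=p(e_j)$, the Grassmann connection is $\nabla^{Gr}(\sum_j\Phi_ja_j)=\sum_j\Phi_j\otimes_{\mathcal{A}}da_j$ and $\nabla_0:=\nabla^{Gr}-Q^{-1}\circ(\wedge\circ\nabla^{Gr}+d)$. $\mathcal{Z}(\mathcal{M})=\{m:am=ma\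 \forall a\}$; $\mathcal{E}$ is centered if $\mathcal{Z}(\mathcal{E})$ right-spans $\mathcal{E}$. A pseudo-Riemannian bilinear metric is an $\mathcal{A}$-bimodule map $g:\mathcal{E}\otimes_{\mathcal{A}}\mathcal{E}\to\mathcal{A}$ with $g\circ\sigma=g$ such that $e\mapsto g(e\otimes_{\mathcal{A}}-)$ is a right module isomorphism $\mathcal{E}\to\mathrm{Hom}_{\mathcal{A}}(\mathcal{E},\mathcal{A})$. $\nabla$ is compatible with $g$ on $\mathcal{Z}(\mathcal{E})$ if for all $\omega,\eta\in\mathcal{Z}(\mathcal{E})$: $(g\otimes_{\mathcal{A}}\mathrm{id})\{\sigma_{23}(\nabla(\omega)\otimes_{\mathcal{A}}\eta)+\omega\otimes_{\mathcal{A}}\nabla(\eta)\}=d(g(\omega\otimes_{\mathcal{A}}\eta))$, where $\sigma_{23}=\mathrm{id}\otimes_{\mathcal{A}}\sigma$ on $\mathcal{E}^{\otimes_{\mathcal{A}}3}$ and $(g\otimes_{\mathcal{A}}\mathrm{id})(x\otimes y\otimes z)=g(x\otimes_{\mathcal{A}}y)z$. *)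

(* Setting of Theorem 5.5: a (degree <= 2 truncation of a)
   differential calculus over a complex algebra, tensor products over A given
   by their universal property, splitting of E (x)_A E, Grassmann connection. *)
From HB Require Import structures.
From mathcomp Require Import all_boot all_order all_algebra.
From mathcomp Require Import complex Rstruct.
Set Implicit Arguments.
Unset Strict Implicit.
Unset Printing Implicit Defensive.
Import GRing.Theory.
Local Open Scope ring_scope.

Notation Cx := (complex Rdefinitions.R).

Definition additive_fun (M N : zmodType) (f : M -> N) : Prop :=
  forall x y, f (x + y) = f x + f y.

(* A-bimodules over the complex algebra A (C acting through A, the left and
   right C-actions agreeing). *)
Record bimodule (A : algType Cx) := Bimodule {
  bm_car :> zmodType;
  lact : A -> bm_car -> bm_car;
  ract : bm_car -> A -> bm_car;
  lactDr : forall a x y, lact a (x + y) = lact a x + lact a y;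
  lactDl : forall a b x, lact (a + b) x = lact a x + lact b x;
  lact1 : forall x, lact 1 x = x;
  lactM : forall a b x, lact (a * b) x = lact a (lact b x);
  ractDl : forall a x y, ract (x + y) a = ract x a + ract y a;
  ractDr : forall a b x, ract x (a + b) = ract x a + ract x b;
  ract1 : forall x, ract x 1 = x;
  ractM : forall a b x, ract x (a * b) = ract (ract x a) b;
  lractA : forall a b x, ract (lact a x) b = lact a (ract x b);
  scal_central : forall (k : Cx) x, lact (k%:A) x = ract x (k%:A)
}.
Arguments lact {A} M a x : rename.
Arguments ract {A} M x a : rename.

(* A first order differential calculus, up to degree 2:
   Omega^0 = A, Omega^1, Omega^2, d : Omega^0 -> Omega^1 -> Omega^2,
   wedge : Omega^1 x Omega^1 -> Omega^2. *)
Record calculus (A : algType Cx) := Calculus {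
  Om1 : bimodule A;
  Om2 : bimodule A;
  d0 : A -> Om1;
  d1 : Om1 -> Om2;
  wed : Om1 -> Om1 -> Om2;
  wedDl : forall x y z, wed (x + y) z = wed x z + wed y z;
  wedDr : forall x y z, wed x (y + z) = wed x y + wed x z;
  wed_lact : forall a x y, wed (lact Om1 a x) y = lact Om2 a (wed x y);
  wed_mid : forall a x y, wed (ract Om1 x a) y = wed x (lact Om1 a y);
  wed_ract : forall a x y, wed x (ract Om1 y a) = ract Om2 (wed x y) a;
  d0D : forall a b, d0 (a + b) = d0 a + d0 b;
  d0Z : forall (k : Cx) a, d0 (k *: a) = lact Om1 (k%:A) (d0 a);
  d1D : forall x y, d1 (x + y) = d1 x + d1 y;
  d1Z : forall (k : Cx) x, d1 (lact Om1 (k%:A) x) = lact Om2 (k%:A) (d1 x);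
  d0M : forall a b, d0 (a * b) = ract Om1 (d0 a) b + lact Om1 a (d0 b);
  d1_lact : forall a x, d1 (lact Om1 a x) = wed (d0 a) x + lact Om2 a (d1 x);
  d1_ract : forall a x, d1 (ract Om1 x a) = ract Om2 (d1 x) a - wed x (d0 a);
  d1d0 : forall a, d1 (d0 a) = 0;
  span1 : forall x : Om1, exists s : seq (A * A),
      x = \sum_(q <- s) ract Om1 (d0 q.1) q.2;
  span2 : forall y : Om2, exists s : seq (A * A * A),
      y = \sum_(q <- s) ract Om2 (wed (d0 q.1.1) (d0 q.1.2)) q.2
}.
Arguments Om1 {A} c : rename.
Arguments Om2 {A} c : rename.
Arguments d0 {A} c a : rename.
Arguments d1 {A} c x : rename.
Arguments wed {A} c x y : rename.

(* E (x)_A E, given by its universal property for additive A-balanced maps. *)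
Definition balanced2 (A : algType Cx) (E : bimodule A) (M : zmodType)
  (f : E -> E -> M) : Prop :=
  [/\ forall x y z, f (x + y) z = f x z + f y z,
      forall x y z, f x (y + z) = f x y + f x z &
      forall a x y, f (ract E x a) y = f x (lact E a y)].

Record tensor2 (A : algType Cx) (E : bimodule A) := Tensor2 {
  T2 :> zmodType;
  tens2 : E -> E -> T2;
  tens2_bal : balanced2 tens2;
  lift2 : forall M : zmodType, (E -> E -> M) -> T2 -> M;
  lift2_add : forall (M : zmodType) f, @balanced2 A E M f -> additive_fun (lift2 f);
  lift2_tens : forall (M : zmodType) f, @balanced2 A E M f ->
      forall x y, lift2 f (tens2 x y) = f x y;
  lift2_uniq : forall (M : zmodType) f (h : T2 -> M), additive_fun h ->
      (forall x y, h (tens2 x y) = f x y) -> forall t, h t = lift2 f t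
}.
Arguments tens2 {A E} t x y : rename.
Arguments lift2 {A E} t {M} f u : rename.

(* E (x)_A E (x)_A E, given by its universal property. *)
Definition balanced3 (A : algType Cx) (E : bimodule A) (M : zmodType)
  (f : E -> E -> E -> M) : Prop :=
  [/\ forall x x' y z, f (x + x') y z = f x y z + f x' y z,
      forall x y y' z, f x (y + y') z = f x y z + f x y' z,
      forall x y z z', f x y (z + z') = f x y z + f x y z',
      forall a x y z, f (ract E x a) y z = f x (lact E a y) z &
      forall a x y z, f x (ract E y a) z = f x y (lact E a z)].

Record tensor3 (A : algType Cx) (E : bimodule A) := Tensor3 {
  T3 :> zmodType;
  tens3 : E -> E -> E -> T3;
  tens3_bal : balanced3 tens3;
  lift3 : forall M : zmodType, (E -> E -> E -> M) -> T3 -> M;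
  lift3_add : forall (M : zmodType) f, @balanced3 A E M f -> additive_fun (lift3 f);
  lift3_tens : forall (M : zmodType) f, @balanced3 A E M f ->
      forall x y z, lift3 f (tens3 x y z) = f x y z;
  lift3_uniq : forall (M : zmodType) f (h : T3 -> M), additive_fun h ->
      (forall x y z, h (tens3 x y z) = f x y z) -> forall t, h t = lift3 f t
}.
Arguments tens3 {A E} t x y z : rename.
Arguments lift3 {A E} t {M} f u : rename.

Section Ops.
Variables (A : algType Cx) (Om : calculus A).
Local Notation E := (Om1 Om).
Variables (T : tensor2 E) (T3 : tensor3 E).

Definition lact2 (a : A) (t : T) : T := lift2 T (fun x y => tens2 T (lact E a x) y) t.
Definition ract2 (t : T) (a : A) : T := lift2 T (fun x y => tens2 T x (ract E y a)) t.

Definition wedgeT (t : T) : Om2 Om := lift2 T (wed Om) t.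

Definition tensT2E (t : T) (z : E) : T3 := lift2 T (fun x y => tens3 T3 x y z) t.
Definition tensET2 (x : E) (t : T) : T3 := lift2 T (fun y z => tens3 T3 x y z) t.

Definition central (M : bimodule A) (m : M) : Prop := forall a, lact M a m = ract M m a.

Definition centered : Prop :=
  forall x : E, exists s : seq (E * A),
    (forall q, q \in s -> central q.1) /\ x = \sum_(q <- s) ract E q.1 q.2.

(* P_sym = 1 - Q^{-1} o wedge (idempotent with image ker wedge, kernel F),
   sigma = 2 P_sym - 1. *)
Definition Psym (Qinv : Om2 Om -> T) (t : T) : T := t - Qinv (wedgeT t).
Definition sigma (Qinv : Om2 Om -> T) (t : T) : T := Psym Qinv t *+ 2 - t.

Definition sigma23 (Qinv : Om2 Om -> T) (u : T3) : T3 :=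
  lift3 T3 (fun x y z => tensET2 x (sigma Qinv (tens2 T y z))) u.

Definition g_id (g : T -> A) (u : T3) : E :=
  lift3 T3 (fun x y z => lact E (g (tens2 T x y)) z) u.

Definition nablaGr (n : nat) (Phi : 'I_n -> E) (xi : E -> 'I_n -> A) (x : E) : T :=
  \sum_(j < n) tens2 T (Phi j) (d0 Om (xi x j)).

Definition nabla0 (Qinv : Om2 Om -> T) (n : nat) (Phi : 'I_n -> E)
  (xi : E -> 'I_n -> A) (x : E) : T :=
  nablaGr Phi xi x - Qinv (wedgeT (nablaGr Phi xi x) + d1 Om x).

Definition is_connection (nabla : E -> T) : Prop :=
  [/\ additive_fun nabla,
      forall (k : Cx) x, nabla (lact E (k%:A) x) = lact2 (k%:A) (nabla x) &
      forall x a, nabla (ract E x a) = ract2 (nabla x) a + tens2 T x (d0 Om a)].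

Definition torsionless (nabla : E -> T) : Prop :=
  forall x, wedgeT (nabla x) + d1 Om x = 0.

Definition pseudo_riemannian (Qinv : Om2 Om -> T) (g : T -> A) : Prop :=
  [/\ additive_fun g,
      forall a t, g (lact2 a t) = a * g t &
      forall a t, g (ract2 t a) = g t * a] /\
  (forall t, g (sigma Qinv t) = g t) /\
  (* e |-> g (e (x)_A -) is a bijection E -> Hom_A(E, A) *)
  (forall x, (forall y, g (tens2 T x y) = 0) -> x = 0) /\
  (forall phi : E -> A, additive_fun phi -> (forall y a, phi (ract E y a) = phi y * a) ->
        exists x, forall y, g (tens2 T x y) = phi y).

Definition compatible_on_center (Qinv : Om2 Om -> T) (g : T -> A) (nabla : E -> T) : Prop :=
  forall x y, central x -> central y ->
    g_id g (sigma23 Qinv (tensT2E (nabla x) y) + tensET2 x (nabla y))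
    = d0 Om (g (tens2 T x y)).

(* The paper's abbreviation: for x = sum_i x_(0)i (x)_A x_(1)i given by the
   list s of pairs (x_(0)i, x_(1)i),
   gprod g s u v = sum_i g(u (x)_A x_(0)i) g(v (x)_A x_(1)i). *)
Definition gprod (g : T -> A) (s : seq (E * E)) (u v : E) : A :=
  \sum_(q <- s) g (tens2 T u q.1) * g (tens2 T v q.2).

Definition central_decomp (t : T) (s : seq (E * E)) : Prop :=
  t = \sum_(q <- s) tens2 T q.1 q.2 /\ (forall q, q \in s -> central q.2).

End Ops.

(* For central b and c, t = sum t0 (x) t1 |-> sum g(b (x) t0) g(c (x) t1) is well defined
   on E (x)_A E, since g(c (x) a y) = a g(c (x) y); call it [gpair g b c] and put
   P(x; b, c) := gpair g b c (nabla x).  Additive maps on E (x)_A E are determined by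
   their values on (z (x) z') a with z, z' central, and there sigma is the flip and g is
   symmetric, so gpair g b c o sigma = gpair g c b.  Pairing the compatibility identity
   with a central c gives P(x; y, c) + P(y; x, c) = g(c (x) d g(x (x) y)).  Since nabla
   and nabla_0 are both torsionless, nabla x - nabla_0 x lies in ker wedge, where sigma
   is the identity; hence P - P_0 is symmetric in (b, c).  Koszul's cyclic combination
   of three compatibility identities then isolates 2 P(eta; omega, theta). *)

From HB Require Import structures.
From mathcomp Require Import all_boot all_order all_algebra.
From mathcomp Require Import complex Rstruct ssrAC.
Set Implicit Arguments.
Unset Strict Implicit.
Unset Printing Implicit Defensive.
Import GRing.Theory.
Local Open Scope ring_scope.

Section AdditiveFun.
Variables (M N : zmodType) (f : M -> N).
Hypothesis f_add : additive_fun f.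

Lemma additive_fun0 : f 0 = 0.
Proof. by apply: (addrI (f 0)); rewrite -f_add !addr0. Qed.

Lemma additive_funN x : f (- x) = - f x.
Proof. by apply: (addrI (f x)); rewrite -f_add !subrr additive_fun0. Qed.

Lemma additive_funB x y : f (x - y) = f x - f y.
Proof. by rewrite f_add additive_funN. Qed.

Lemma additive_funMn x k : f (x *+ k) = f x *+ k.
Proof. by elim: k => [|k IHk]; rewrite ?mulr0n ?additive_fun0 // !mulrS f_add IHk. Qed.

Lemma additive_fun_sum (I : Type) (s : seq I) (F : I -> M) :
  f (\sum_(i <- s) F i) = \sum_(i <- s) f (F i).
Proof. exact: (big_morph f f_add additive_fun0). Qed.

End AdditiveFun.

Lemma additive_fun_comp (M N P : zmodType) (f : N -> P) (h : M -> N) :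
  additive_fun f -> additive_fun h -> additive_fun (fun x => f (h x)).
Proof. by move=> f_add h_add x y; rewrite h_add f_add. Qed.

Lemma ractN1 (A : algType Cx) (M : bimodule A) (x : M) : ract M x (-1) = - x.
Proof. by rewrite (@additive_funN _ _ (ract M x) (fun a b => ractDr a b x)) ract1. Qed.

Section TensorSquare.
Context {A : algType Cx} {Om : calculus A} {T : tensor2 (Om1 Om)}.
Local Notation E := (Om1 Om).

Lemma tens2Dl x x' y : tens2 T (x + x') y = tens2 T x y + tens2 T x' y.
Proof. by case: (tens2_bal T). Qed.

Lemma tens2Dr x y y' : tens2 T x (y + y') = tens2 T x y + tens2 T x y'.
Proof. by case: (tens2_bal T). Qed.

Lemma tens2_mid a x y : tens2 T (ract E x a) y = tens2 T x (lact E a y).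
Proof. by case: (tens2_bal T). Qed.

Lemma tens2_additivel y : additive_fun (fun x => tens2 T x y).
Proof. by move=> x x'; rewrite tens2Dl. Qed.

Lemma tens2_additiver x : additive_fun (tens2 T x).
Proof. by move=> y y'; rewrite tens2Dr. Qed.

Lemma eq_additive_tens2 (M : zmodType) (h1 h2 : T -> M) :
  additive_fun h1 -> additive_fun h2 ->
  (forall x y, h1 (tens2 T x y) = h2 (tens2 T x y)) -> h1 =1 h2.
Proof.
move=> h1_add h2_add h12 t; pose f x y := h1 (tens2 T x y).
rewrite (lift2_uniq h1_add (f := f) (fun x y => erefl)).
by rewrite (lift2_uniq h2_add (f := f) (fun x y => esym (h12 x y))).
Qed.

Lemma tens2_ract_balanced a : balanced2 (fun x y => tens2 T x (ract E y a)).
Proof.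
split=> [x x' y|x y y'|b x y]; first by rewrite tens2Dl.
  by rewrite ractDl tens2Dr.
by rewrite tens2_mid lractA.
Qed.

Lemma tens2_lact_balanced a : balanced2 (fun x y => tens2 T (lact E a x) y).
Proof.
split=> [x x' y|x y y'|b x y]; first by rewrite lactDr tens2Dl.
  by rewrite tens2Dr.
by rewrite -lractA tens2_mid.
Qed.

Lemma ract2_tens2 x y a : ract2 (tens2 T x y) a = tens2 T x (ract E y a).
Proof. exact: (lift2_tens T (tens2_ract_balanced a)). Qed.

Lemma lact2_tens2 x y a : lact2 a (tens2 T x y) = tens2 T (lact E a x) y.
Proof. exact: (lift2_tens T (tens2_lact_balanced a)). Qed.

Lemma ract2_additive a : additive_fun (@ract2 A Om T ^~ a).
Proof. exact: (lift2_add (tens2_ract_balanced a)). Qed.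

Lemma lact2_additive a : additive_fun (@lact2 A Om T a).
Proof. exact: (lift2_add (tens2_lact_balanced a)). Qed.

Lemma ract2N1 (t : T) : ract2 t (-1) = - t.
Proof.
apply: (eq_additive_tens2 (ract2_additive (-1))) => [u v|x y]; first by rewrite opprD.
by rewrite ract2_tens2 ractN1 (additive_funN (tens2_additiver x)).
Qed.

Lemma wed_balanced : balanced2 (wed Om).
Proof. by split; [exact: wedDl | exact: wedDr | exact: wed_mid]. Qed.

Lemma wedgeT_additive : additive_fun (@wedgeT A Om T).
Proof. exact: (lift2_add wed_balanced). Qed.

Lemma wedgeT_tens2 x y : wedgeT (tens2 T x y) = wed Om x y.
Proof. exact: (lift2_tens T wed_balanced). Qed.

Lemma wedgeT_ract2 (t : T) a : wedgeT (ract2 t a) = ract (Om2 Om) (wedgeT t) a.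
Proof.
apply: (eq_additive_tens2 (h1 := fun t => wedgeT (ract2 t a))
                          (h2 := fun t => ract (Om2 Om) (wedgeT t) a)).
- exact: (additive_fun_comp wedgeT_additive (ract2_additive a)).
- exact: (additive_fun_comp (fun x y => ractDl a x y) wedgeT_additive).
- by move=> x y; rewrite ract2_tens2 !wedgeT_tens2 wed_ract.
Qed.

Lemma lact2_central_tens2 z z' a c : central z -> central z' ->
  lact2 a (ract2 (tens2 T z z') c) = ract2 (tens2 T z z') (a * c).
Proof. by move=> Hz Hz'; rewrite !ract2_tens2 lact2_tens2 Hz tens2_mid -lractA Hz' -ractM. Qed.

Hypothesis E_centered : centered Om.

Lemma eq_additive_central_tens2 (M : zmodType) (h1 h2 : T -> M) :
  additive_fun h1 -> additive_fun h2 ->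
  (forall z z' c, central z -> central z' ->
     h1 (ract2 (tens2 T z z') c) = h2 (ract2 (tens2 T z z') c)) ->
  h1 =1 h2.
Proof.
move=> h1_add h2_add h12; apply: eq_additive_tens2 => // x y.
have [sx [sx_central ->]] := E_centered x; have [sy [sy_central ->]] := E_centered y.
rewrite (additive_fun_sum (tens2_additivel _)).
rewrite (additive_fun_sum h1_add) (additive_fun_sum h2_add).
apply: eq_big_seq => q q_sx.
rewrite (additive_fun_sum (tens2_additiver _)) (additive_fun_sum h1_add) (additive_fun_sum h2_add).
apply: eq_big_seq => r r_sy.
rewrite tens2_mid -lractA (sy_central r r_sy) -ractM -ract2_tens2.
by apply: h12; [exact: sx_central | exact: sy_central].
Qed.

End TensorSquare.

Section Splitting.
Context {A : algType Cx} {Om : calculus A} {T : tensor2 (Om1 Om)}.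
Variables (F : T -> Prop) (Qinv : Om2 Om -> T).
Hypotheses (HFD : forall t u, F t -> F u -> F (t + u))
  (HFr : forall t a, F t -> F (ract2 t a))
  (HQinvF : forall w, F (Qinv w)) (HQinv : forall w, wedgeT (Qinv w) = w)
  (HFker : forall t, F t -> wedgeT t = 0 -> t = 0).

Lemma wedgeT_inj_F t u : F t -> F u -> wedgeT t = wedgeT u -> t = u.
Proof.
move=> Ft Fu tu; apply/eqP; rewrite -subr_eq0; apply/eqP; apply: HFker.
  by rewrite -ract2N1; apply: HFD => //; apply: HFr.
by rewrite (additive_funB wedgeT_additive) tu subrr.
Qed.

Lemma Qinv_additive : additive_fun Qinv.
Proof.
move=> w w'; apply: wedgeT_inj_F; rewrite ?wedgeT_additive ?HQinv //.
exact: HFD.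
Qed.

Lemma Qinv_ract w a : Qinv (ract (Om2 Om) w a) = ract2 (Qinv w) a.
Proof. by apply: wedgeT_inj_F; rewrite ?wedgeT_ract2 ?HQinv //; apply: HFr. Qed.

End Splitting.

Section Sigma.
Context {A : algType Cx} {Om : calculus A} {T : tensor2 (Om1 Om)} (Qinv : Om2 Om -> T).
Hypotheses (QinvD : additive_fun Qinv)
  (QinvR : forall w a, Qinv (ract (Om2 Om) w a) = ract2 (Qinv w) a).

Lemma sigma_additive : additive_fun (sigma Qinv).
Proof.
move=> t u; rewrite /sigma /Psym wedgeT_additive QinvD.
by rewrite opprD [t + u + _]addrACA mulrnDl opprD [LHS]addrACA.
Qed.

Lemma sigma_ract2 t a : sigma Qinv (ract2 t a) = ract2 (sigma Qinv t) a.
Proof.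
rewrite /sigma /Psym wedgeT_ract2 QinvR.
have ract2a_add := ract2_additive (T := T) a.
by rewrite (additive_funB ract2a_add) (additive_funMn ract2a_add) (additive_funB ract2a_add).
Qed.

Lemma sigma_ker_wedgeT t : wedgeT t = 0 -> sigma Qinv t = t.
Proof. by rewrite /sigma /Psym => ->; rewrite additive_fun0 // subr0 mulr2n addrK. Qed.

Hypothesis E_centered : centered Om.
Hypothesis sigma_flip : forall x y, central x -> central y ->
  sigma Qinv (tens2 T x y) = tens2 T y x.

Lemma sigma_lact2 a t : sigma Qinv (lact2 a t) = lact2 a (sigma Qinv t).
Proof.
apply: (eq_additive_central_tens2 E_centered (h1 := fun t => sigma Qinv (lact2 a t))
                                             (h2 := fun t => lact2 a (sigma Qinv t))).
- exact: (additive_fun_comp sigma_additive (lact2_additive a)).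
- exact: (additive_fun_comp (lact2_additive a) sigma_additive).
- move=> z z' c Hz Hz'.
  by rewrite lact2_central_tens2 // !sigma_ract2 sigma_flip // lact2_central_tens2.
Qed.

End Sigma.

Lemma torsionless_wedgeT_sub (A : algType Cx) (Om : calculus A) (T : tensor2 (Om1 Om))
    (nabla nabla' : Om1 Om -> T) x :
  torsionless nabla -> torsionless nabla' -> wedgeT (nabla x - nabla' x) = 0.
Proof.
move=> tl tl'; rewrite (additive_funB wedgeT_additive).
by apply/eqP; rewrite subr_eq0; apply/eqP; apply: (addIr (d1 Om x)); rewrite tl tl'.
Qed.

Lemma nabla0_torsionless (A : algType Cx) (Om : calculus A) (T : tensor2 (Om1 Om))
    (Qinv : Om2 Om -> T) (n : nat) (Phi : 'I_n -> Om1 Om) (xi : Om1 Om -> 'I_n -> A) :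
  (forall w, wedgeT (Qinv w) = w) -> torsionless (nabla0 Qinv Phi xi).
Proof.
move=> HQinv x; rewrite /nabla0 (additive_funB wedgeT_additive) HQinv.
by rewrite opprD addrA subrr add0r addNr.
Qed.

Section Metric.
Context {A : algType Cx} {Om : calculus A} {T : tensor2 (Om1 Om)}.
Local Notation E := (Om1 Om).
Variables (Qinv : Om2 Om -> T) (g : T -> A).
Hypothesis g_metric : pseudo_riemannian Qinv g.

Lemma g_additive : additive_fun g.
Proof. by case: g_metric => [[]]. Qed.

Lemma g_lact2 a t : g (lact2 a t) = a * g t.
Proof. by case: g_metric => [[]]. Qed.

Lemma g_ract2 a t : g (ract2 t a) = g t * a.
Proof. by case: g_metric => [[]]. Qed.

Lemma g_sigma t : g (sigma Qinv t) = g t.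
Proof. by case: g_metric => _ []. Qed.

Lemma g_tens2_ract x y a : g (tens2 T x (ract E y a)) = g (tens2 T x y) * a.
Proof. by rewrite -ract2_tens2 g_ract2. Qed.

Lemma g_tens2_lact x y a : g (tens2 T (lact E a x) y) = a * g (tens2 T x y).
Proof. by rewrite -lact2_tens2 g_lact2. Qed.

Lemma g_central_lact c y a : central c -> g (tens2 T c (lact E a y)) = a * g (tens2 T c y).
Proof. by move=> Hc; rewrite -tens2_mid -Hc g_tens2_lact. Qed.

Lemma g_central_comm b z a : central b -> central z -> GRing.comm a (g (tens2 T b z)).
Proof. by move=> Hb Hz; rewrite /GRing.comm -g_tens2_lact Hb tens2_mid Hz g_tens2_ract. Qed.

Definition gpair (b c : E) : T -> A :=
  lift2 T (fun x y => g (tens2 T b x) * g (tens2 T c y)).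

Lemma gpair_balanced b c : central c ->
  balanced2 (fun x y => g (tens2 T b x) * g (tens2 T c y)).
Proof.
move=> Hc; split=> [x x' y|x y y'|a x y].
- by rewrite tens2Dr g_additive mulrDl.
- by rewrite tens2Dr g_additive mulrDr.
- by rewrite g_tens2_ract g_central_lact // mulrA.
Qed.

Lemma gpair_additive b c : central c -> additive_fun (gpair b c).
Proof. by move=> Hc; apply: lift2_add; apply: gpair_balanced. Qed.

Lemma gpair_tens2 b c x y : central c ->
  gpair b c (tens2 T x y) = g (tens2 T b x) * g (tens2 T c y).
Proof. by move=> Hc; rewrite /gpair (lift2_tens T (gpair_balanced b Hc)). Qed.

Lemma gpair_ract2 b c t a : central c -> gpair b c (ract2 t a) = gpair b c t * a.
Proof.
move=> Hc; apply: (eq_additive_tens2 (h1 := fun t => gpair b c (ract2 t a))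
                                     (h2 := fun t => gpair b c t * a)) => [||x y].
- exact: (additive_fun_comp (gpair_additive b Hc) (ract2_additive a)).
- by move=> u v; rewrite (gpair_additive b Hc) mulrDl.
- by rewrite ract2_tens2 !gpair_tens2 // g_tens2_ract mulrA.
Qed.

Lemma gprod_gpair s t b c : central c -> t = \sum_(q <- s) tens2 T q.1 q.2 ->
  gprod g s b c = gpair b c t.
Proof.
move=> Hc ->; rewrite /gprod (additive_fun_sum (gpair_additive b Hc)).
by apply: eq_bigr => q _; rewrite gpair_tens2.
Qed.

Lemma gprod_swap_gpair s t b c : central b -> central c -> central_decomp t s ->
  gprod g (map (fun q => (q.2, q.1)) s) b c = gpair c b t.
Proof.
move=> Hb Hc [-> s_central]; rewrite /gprod big_map (additive_fun_sum (gpair_additive c Hb)).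
by apply: eq_big_seq => q q_s; rewrite gpair_tens2 // (g_central_comm _ Hb (s_central q q_s)).
Qed.

Hypothesis sigma_flip : forall x y, central x -> central y ->
  sigma Qinv (tens2 T x y) = tens2 T y x.

Lemma g_central_sym x y : central x -> central y -> g (tens2 T x y) = g (tens2 T y x).
Proof. by move=> Hx Hy; rewrite -g_sigma sigma_flip. Qed.

Hypotheses (QinvD : additive_fun Qinv)
  (QinvR : forall w a, Qinv (ract (Om2 Om) w a) = ract2 (Qinv w) a).
Hypothesis E_centered : centered Om.

Lemma gpair_sigma b c t : central b -> central c ->
  gpair b c (sigma Qinv t) = gpair c b t.
Proof.
move=> Hb Hc.
apply: (eq_additive_central_tens2 E_centered (h1 := fun t => gpair b c (sigma Qinv t))
                                             (h2 := gpair c b)).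
- exact: (additive_fun_comp (gpair_additive b Hc) (sigma_additive QinvD)).
- exact: gpair_additive.
- move=> z z' a Hz Hz'.
  rewrite (sigma_ract2 QinvR) sigma_flip // !gpair_ract2 // !gpair_tens2 //.
  by rewrite (g_central_comm _ Hb Hz').
Qed.

Lemma gpair_torsionless_sub_sym (nabla nabla' : E -> T) x b c :
  torsionless nabla -> torsionless nabla' -> central b -> central c ->
  gpair b c (nabla x) - gpair b c (nabla' x) = gpair c b (nabla x) - gpair c b (nabla' x).
Proof.
move=> tl tl' Hb Hc.
rewrite -(additive_funB (gpair_additive b Hc)) -(additive_funB (gpair_additive c Hb)).
by rewrite -gpair_sigma // sigma_ker_wedgeT // torsionless_wedgeT_sub.
Qed.

End Metric.

Section TensorCube.
Context {A : algType Cx} {Om : calculus A} {T : tensor2 (Om1 Om)}.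
Local Notation E := (Om1 Om).
Variable T3 : tensor3 E.

Lemma tens3_left_balanced z : balanced2 (fun x y => tens3 T3 x y z).
Proof. by case: (tens3_bal T3). Qed.

Lemma tens3_right_balanced x : balanced2 (fun y z => tens3 T3 x y z).
Proof. by case: (tens3_bal T3). Qed.

Lemma tensT2E_additive z : additive_fun (fun t : T => tensT2E T3 t z).
Proof. exact: (lift2_add (tens3_left_balanced z)). Qed.

Lemma tensET2_additive x : additive_fun (@tensET2 A Om T T3 x).
Proof. exact: (lift2_add (tens3_right_balanced x)). Qed.

Lemma tensT2E_tens2 x y z : tensT2E T3 (tens2 T x y) z = tens3 T3 x y z.
Proof. exact: (lift2_tens T (tens3_left_balanced z)). Qed.

Lemma tensET2_tens2 x y z : tensET2 T3 x (tens2 T y z) = tens3 T3 x y z.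
Proof. exact: (lift2_tens T (tens3_right_balanced x)). Qed.

Lemma tensET2Dl x x' (t : T) : tensET2 T3 (x + x') t = tensET2 T3 x t + tensET2 T3 x' t.
Proof.
apply: (eq_additive_tens2 (h1 := tensET2 T3 (x + x'))
                          (h2 := fun t => tensET2 T3 x t + tensET2 T3 x' t)) => [||y z].
- exact: tensET2_additive.
- by move=> u v; rewrite !tensET2_additive addrACA.
- by rewrite !tensET2_tens2; case: (tens3_bal T3).
Qed.

Lemma tensET2_mid x a (t : T) : tensET2 T3 (ract E x a) t = tensET2 T3 x (lact2 a t).
Proof.
apply: (eq_additive_tens2 (h1 := tensET2 T3 (ract E x a))
                          (h2 := fun t => tensET2 T3 x (lact2 a t))) => [||y z].
- exact: tensET2_additive.
- exact: (additive_fun_comp (tensET2_additive x) (lact2_additive a)).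
- by rewrite lact2_tens2 !tensET2_tens2; case: (tens3_bal T3).
Qed.

End TensorCube.

Section Compatibility.
Context {A : algType Cx} {Om : calculus A} {T : tensor2 (Om1 Om)}.
Local Notation E := (Om1 Om).
Variables (T3 : tensor3 E) (Qinv : Om2 Om -> T) (g : T -> A).
Hypothesis g_metric : pseudo_riemannian Qinv g.
Hypotheses (QinvD : additive_fun Qinv)
  (QinvR : forall w a, Qinv (ract (Om2 Om) w a) = ract2 (Qinv w) a).
Hypothesis E_centered : centered Om.
Hypothesis sigma_flip : forall x y, central x -> central y ->
  sigma Qinv (tens2 T x y) = tens2 T y x.

Lemma sigma23_balanced : balanced3 (fun x y z => tensET2 T3 x (sigma Qinv (tens2 T y z))).
Proof.
have sigma_add := sigma_additive QinvD.
split=> [x x' y z|x y y' z|x y z z'|a x y z|a x y z].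
- by rewrite tensET2Dl.
- by rewrite tens2Dl sigma_add tensET2_additive.
- by rewrite tens2Dr sigma_add tensET2_additive.
- by rewrite tensET2_mid -(sigma_lact2 QinvD QinvR E_centered sigma_flip) lact2_tens2.
- by rewrite tens2_mid.
Qed.

Lemma g_id_balanced : balanced3 (fun x y z => lact E (g (tens2 T x y)) z).
Proof.
split=> [x x' y z|x y y' z|x y z z'|a x y z|a x y z].
- by rewrite tens2Dl (g_additive g_metric) lactDl.
- by rewrite tens2Dr (g_additive g_metric) lactDl.
- by rewrite lactDr.
- by rewrite tens2_mid.
- by rewrite (g_tens2_ract g_metric) lactM.
Qed.

Lemma g_id_additive : additive_fun (@g_id A Om T T3 g).
Proof. exact: (lift3_add g_id_balanced). Qed.

Lemma sigma23_additive : additive_fun (@sigma23 A Om T T3 Qinv).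
Proof. exact: (lift3_add sigma23_balanced). Qed.

Lemma g_tens2_additive c : additive_fun (fun v => g (tens2 T c v)).
Proof. by move=> u v; rewrite tens2Dr (g_additive g_metric). Qed.

Lemma g_g_id_sigma23 y c (t : T) : central y -> central c ->
  g (tens2 T c (g_id g (sigma23 Qinv (tensT2E T3 t y)))) = gpair g y c t.
Proof.
move=> Hy Hc.
apply: (eq_additive_central_tens2 E_centered
  (h1 := fun t => g (tens2 T c (g_id g (sigma23 Qinv (tensT2E T3 t y))))) (h2 := gpair g y c)).
- apply: (additive_fun_comp (g_tens2_additive c)).
  apply: (additive_fun_comp g_id_additive).
  exact: (additive_fun_comp sigma23_additive (tensT2E_additive T3 y)).
- exact: (gpair_additive g_metric).
- move=> z z' a Hz Hz'.
  rewrite ract2_tens2 tensT2E_tens2 /sigma23 (lift3_tens T3 sigma23_balanced).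
  rewrite tens2_mid Hy -ract2_tens2 (sigma_ract2 QinvR) sigma_flip //.
  rewrite ract2_tens2 tensET2_tens2 /g_id (lift3_tens T3 g_id_balanced).
  rewrite (g_central_lact g_metric) // (gpair_tens2 g_metric) //.
  by rewrite (g_central_sym g_metric sigma_flip Hz Hy).
Qed.

Lemma g_g_id_tensET2 c x (t : T) : central c ->
  g (tens2 T c (g_id g (tensET2 T3 x t))) = gpair g x c t.
Proof.
move=> Hc.
apply: (eq_additive_tens2 (h1 := fun t => g (tens2 T c (g_id g (tensET2 T3 x t))))
                          (h2 := gpair g x c)) => [||y z].
- apply: (additive_fun_comp (g_tens2_additive c)).
  exact: (additive_fun_comp g_id_additive (tensET2_additive T3 x)).
- exact: (gpair_additive g_metric).
- rewrite tensET2_tens2 /g_id (lift3_tens T3 g_id_balanced).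
  by rewrite (g_central_lact g_metric) // (gpair_tens2 g_metric).
Qed.

Lemma gpair_compatible (nabla : E -> T) x y c :
  compatible_on_center T3 Qinv g nabla -> central x -> central y -> central c ->
  gpair g y c (nabla x) + gpair g x c (nabla y) = g (tens2 T c (d0 Om (g (tens2 T x y)))).
Proof.
move=> compat Hx Hy Hc; rewrite -(compat x y Hx Hy).
by rewrite g_id_additive g_tens2_additive g_g_id_sigma23 // g_g_id_tensET2.
Qed.

End Compatibility.

Lemma koszul_formula (I : Type) (V : zmodType) (C : I -> Prop) (P P0 D : I -> I -> I -> V) :
  (forall x y c, C x -> C y -> C c -> P x y c + P y x c = D c x y) ->
  (forall x b c, C b -> C c -> P x b c - P0 x b c = P x c b - P0 x c b) ->
  forall w e th, C w -> C e -> C th ->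
  P e w th *+ 2 = D w e th - D e th w + D th w e
    - P0 w e th + P0 w th e + P0 e w th - P0 e th w - P0 th e w + P0 th w e.
Proof.
move=> compat sym w e th Cw Ce Cth.
have P0E x b c : P0 x b c = P x b c - (P x b c - P0 x b c) by rewrite subKr.
rewrite -(compat e th w) // -(compat th w e) // -(compat w e th) //.
rewrite [P0 w th e]P0E [P0 e th w]P0E [P0 th w e]P0E.
rewrite (sym w th e) // (sym e th w) // (sym th w e) // !opprD !addrA !opprK.
(* The right-hand side is now P e w th twice plus nine cancelling pairs. *)
rewrite [RHS](@GRing.add V).[ACl ((((((((((6*13)*(1*12))*(2*17))*(3*16))*(4*8))
                                  *(5*9))*(7*10))*(11*14))*(15*18)))].
by rewrite !subrr !addNr !addr0 mulr2n.
Qed.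

Theorem theorem5p5
  (A : algType Cx) (Om : calculus A)
  (T : tensor2 (Om1 Om)) (T3 : tensor3 (Om1 Om))
  (* E (x)_A E = ker(wedge) (+) F, F a right submodule, Q = wedge|_F : F -> Omega^2
     a right module isomorphism with inverse Qinv *)
  (F : T -> Prop) (Qinv : Om2 Om -> T)
  (HF0 : F 0) (HFD : forall t u, F t -> F u -> F (t + u))
  (HFr : forall t a, F t -> F (ract2 t a))
  (HQinvF : forall w, F (Qinv w)) (HQinv : forall w, wedgeT (Qinv w) = w)
  (HFker : forall t, F t -> wedgeT t = 0 -> t = 0)
  (* E finitely generated projective: E ~ p A^n via xi, Phi_j = p(e_j) *)
  (n : nat) (p : 'M[A]_n) (Phi : 'I_n -> Om1 Om) (xi : Om1 Om -> 'I_n -> A)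
  (Hp : p *m p = p)
  (Hxi_add : forall x y j, xi (x + y) j = xi x j + xi y j)
  (Hxi_r : forall x a j, xi (ract (Om1 Om) x a) j = xi x j * a)
  (Hxi_rec : forall x, x = \sum_(j < n) ract (Om1 Om) (Phi j) (xi x j))
  (HxiPhi : forall j k, xi (Phi j) k = p k j)
  (* E centered, sigma is the flip on central elements *)
  (Hcentered : centered Om)
  (Hflip : forall x y, central x -> central y ->
     sigma Qinv (tens2 T x y) = tens2 T y x)
  (* pseudo-Riemannian bilinear metric g, torsionless connection nabla
     compatible with g on Z(E) *)
  (g : T -> A) (Hg : pseudo_riemannian Qinv g)
  (nabla : Om1 Om -> T) (Hconn : is_connection nabla) (Htl : torsionless nabla)
  (Hcomp : compatible_on_center T3 Qinv g nabla)
  (w e th : Om1 Om) (Hw : central w) (He : central e) (Hth : central th)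
  (sne sw se sth : seq (Om1 Om * Om1 Om))
  (Hsne : central_decomp (nabla e) sne)
  (Hsw : central_decomp (nabla0 Qinv Phi xi w) sw)
  (Hse : central_decomp (nabla0 Qinv Phi xi e) se)
  (Hsth : central_decomp (nabla0 Qinv Phi xi th) sth) :
  gprod g sne w th *+ 2 =
    g (tens2 T w (d0 Om (g (tens2 T e th))))
  - g (tens2 T e (d0 Om (g (tens2 T th w))))
  + g (tens2 T th (d0 Om (g (tens2 T w e))))
  - gprod g sw e th + gprod g (map (fun q => (q.2, q.1)) sw) e th
  + gprod g se w th - gprod g (map (fun q => (q.2, q.1)) se) w th
  - gprod g sth e w + gprod g (map (fun q => (q.2, q.1)) sth) e w.
Proof.
have QinvD := Qinv_additive HFD HFr HQinvF HQinv HFker.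
have QinvR := Qinv_ract HFD HFr HQinvF HQinv HFker.
rewrite (gprod_gpair Hg w Hth (proj1 Hsne)).
rewrite (gprod_gpair Hg e Hth (proj1 Hsw)) (gprod_swap_gpair Hg He Hth Hsw).
rewrite (gprod_gpair Hg w Hth (proj1 Hse)) (gprod_swap_gpair Hg Hw Hth Hse).
rewrite (gprod_gpair Hg e Hw (proj1 Hsth)) (gprod_swap_gpair Hg He Hw Hsth).
apply: (koszul_formula (C := central (M := Om1 Om))
  (P := fun x b c => gpair g b c (nabla x))
  (P0 := fun x b c => gpair g b c (nabla0 Qinv Phi xi x))
  (D := fun c x y => g (tens2 T c (d0 Om (g (tens2 T x y))))))
  => // [x y c Cx Cy Cc | x b c Cb Cc].
- exact: (gpair_compatible Hg QinvD QinvR Hcentered Hflip Hcomp Cx Cy Cc).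
- have tl0 := nabla0_torsionless Phi xi HQinv.
  exact: (gpair_torsionless_sub_sym Hg Hflip QinvD QinvR Hcentered x Htl tl0 Cb Cc).
Qed.
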